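(* Let $n\in\mathbb N$. (a) Suppose that for every finite set $I$ we are given a covariant $n$-tensor field $\tilde\Theta^n_I$ on $\mathcal M_+(I)$. Then $(\tilde\Theta^n_I)$ is a congruent family if and only if there are functions $a_{\mathbf P}:(0,\infty)\to\mathbb R$, $\mathbf P$ ranging over all partitions of $\{1,\dots,n\}$, such that $(\tilde\Theta^n_I)_\mu=\sum_{\mathbf P}a_{\mathbf P}(\|\mu\|)(\tau^{\mathbf P}_I)_\mu$ for all finite $I$ and $\mu\in\mathcal M_+(I)$. (b) Suppose that for every finite set $I$ we are given a covariant $n$-tensor field $\Theta^n_I$ on $\mathcal P_+(I)$. Then $(\Theta^n_I)$ is a congruent family if and only if there are constants $c_{\mathbf P}\in\mathbb R$, $\mathbf P=\{P_1,\dots,P_l\}$ ranging over the partitions of $\{1,\dots,n\}$ with $|P_i|>1$ for all $i$, such that $\Theta^n_I=\sum_{\mathbf P}c_{\mathbf P}\,\tau^{\mathbf P}_I|_{\mathcal P_+(I)}$ for all finite $I$.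
   Context: For a finite set $I$, $\mathcal S(I)=\{\sum_{i\in I}x_i\delta_i:x_i\in\mathbb R\}$ (signed measures), $\|\sum x_i\delta_i\|=\sum|x_i|$, $\mathcal M_+(I)=\{\sum\mu_i\delta_i:\mu_i>0\}$ (open in $\mathcal S(I)$, tangent space $\mathcal S(I)$), $\mathcal P_+(I)=\{\mu\in\mathcal M_+(I):\sum\mu_i=1\}$ (tangent space $\mathcal S_0(I)=\{\sum x_i\delta_i:\sum x_i=0\}$). A covariant $n$-tensor field is a continuously varying family of $n$-multilinear forms on the tangent spaces. For $\mu=\sum\mu_i\delta_i\in\mathcal M_+(I)$ and $V_k=\sum_iV_k^i\delta_i$, the canonical tensor is $(\tau^m_I)_\mu(V_1,\dots,V_m)=\sum_{i\in I}\mu_i^{1-m}V_1^i\cdots V_m^i$; for a partition $\mathbf P=\{P_1,\dots,P_l\}$ of $\{1,\dots,n\}$, $(\tau^{\mathbf P}_I)_\mu(V_1,\dots,V_n)=\prod_{i=1}^l(\tau^{|P_i|}_I)_\mu((V_j)_{j\in P_i})$. A Markov kernel $K:I\to\mathcal P(I')$ between finite sets is given by $K(i)=\sum_{i'}K^i_{i'}\delta_{i'}$ with $K^i_{i'}\ge0$, $\sum_{i'}K^i_{i'}=1$, and $K_*(\sum x_i\delta_i)=\sum_{i,i'}K^i_{i'}x_i\delta_{i'}$; it is congruent if there is a map $\kappa:I'\to I$ with $K^i_{i'}=0$ whenever $\kappa(i')\ne i$. The family $(\tilde\Theta^n_I)$ is congruent if $K^*\tilde\Theta^n_{I'}=\tilde\Theta^n_I$,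 i.e. $(\tilde\Theta^n_{I'})_{K_*\mu}(K_*V_1,\dots,K_*V_n)=(\tilde\Theta^n_I)_\mu(V_1,\dots,V_n)$, for every congruent Markov kernel $K:I\to\mathcal P(I')$ between finite sets for which $K_*$ maps $\mathcal M_+(I)$ into $\mathcal M_+(I')$ (so that the pullback is defined); analogously on $\mathcal P_+(I)$ with tangent vectors in $\mathcal S_0(I)$. *)

From HB Require Import structures.
From mathcomp Require Import all_boot all_order all_algebra.
From mathcomp Require Import reals.
Set Implicit Arguments. Unset Strict Implicit. Unset Printing Implicit Defensive.
Import Order.TTheory GRing.Theory Num.Theory.
Local Open Scope ring_scope.

Section Defs.
Variable R : realType.

(* Elements of S(I) are represented as coefficient functions I -> R. *)
Definition Mplus (I : finType) (mu : I -> R) : Prop := forall i, 0 < mu i.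
Definition Pplus (I : finType) (mu : I -> R) : Prop :=
  Mplus mu /\ \sum_(i : I) mu i = 1.
Definition S0 (I : finType) (x : I -> R) : Prop := \sum_(i : I) x i = 0.
Definition anyvec (I : finType) (x : I -> R) : Prop := True.
Definition mnorm (I : finType) (mu : I -> R) : R := \sum_(i : I) `|mu i|.

Definition upd (n : nat) (I : finType) (V : 'I_n -> I -> R) (k : 'I_n)
  (x : I -> R) : 'I_n -> I -> R := fun j => if j == k then x else V j.

(* A covariant n-tensor field on the domain D (subset of S(I)) with tangent
   space T (subspace of S(I)): a map mu |-> Th mu, where Th mu is an
   n-multilinear form on T, varying continuously with mu in D. *)
Definition tensor_field (n : nat) (I : finType) (D T : (I -> R) -> Prop)
  (Th : (I -> R) -> ('I_n -> I -> R) -> R) : Prop :=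
  (forall mu, D mu -> forall V, (forall j, T (V j)) ->
     forall (k : 'I_n) (a : R) (x y : I -> R), T x -> T y ->
     Th mu (upd V k (fun i => a * x i + y i))
       = a * Th mu (upd V k x) + Th mu (upd V k y))
  /\
  (forall V, (forall j, T (V j)) -> forall mu, D mu ->
     forall eps : R, 0 < eps -> exists2 delta : R, 0 < delta &
       forall nu, D nu -> (forall i, `|nu i - mu i| < delta) ->
         `|Th nu V - Th mu V| < eps).

(* Markov kernels K(i) = sum_i' K i i' delta_i' and congruence *)
Definition markov_kernel (I I' : finType) (K : I -> I' -> R) : Prop :=
  (forall i i', 0 <= K i i') /\ (forall i, \sum_(i' : I') K i i' = 1).
Definition congruent_kernel (I I' : finType) (K : I -> I' -> R) : Prop :=
  markov_kernel K /\
  exists kappa : I' -> I, forall i i', kappa i' != i -> K i i' = 0.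
Definition pushK (I I' : finType) (K : I -> I' -> R) (x : I -> R) : I' -> R :=
  fun i' => \sum_(i : I) K i i' * x i.

Definition congruent_family (n : nat)
  (D : forall I : finType, (I -> R) -> Prop)
  (T : forall I : finType, (I -> R) -> Prop)
  (Th : forall I : finType, (I -> R) -> ('I_n -> I -> R) -> R) : Prop :=
  forall (I I' : finType), (0 < #|I|)%N -> (0 < #|I'|)%N ->
  forall K : I -> I' -> R, congruent_kernel K ->
  (forall mu, D I mu -> D I' (pushK K mu)) ->
  forall mu, D I mu -> forall V : 'I_n -> I -> R, (forall j, T I (V j)) ->
    Th I' (pushK K mu) (fun j => pushK K (V j)) = Th I mu V.

Definition tau_block (n : nat) (I : finType) (B : {set 'I_n}) (mu : I -> R)
  (V : 'I_n -> I -> R) : R :=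
  \sum_(i : I) mu i ^ (1 - (#|B|%:Z)) * \prod_(j in B) V j i.
Definition tauP (n : nat) (I : finType) (P : {set {set 'I_n}}) (mu : I -> R)
  (V : 'I_n -> I -> R) : R :=
  \prod_(B in P) tau_block B mu V.

End Defs.

(* Congruence under permutations and under the kernels that split every atom
   into equal parts drives the proof of (a). At a uniform measure on a set into
   which the blocks of every partition embed, permutation invariance makes the
   value of the family on a tuple of Dirac vectors depend only on the partition
   Q of indices induced by the tuple, while tau^P on that tuple is a nonzero
   weight times [P refines Q]; this system is triangular for refinement, hence
   uniquely solvable, which gives coefficients at every uniform measure.
   Splitting kernels transport them to all measures with commensurable masses,
   the coefficients depending on the total mass only, and continuity extends the
   formula to all of M_+(I). For (b), mu |-> Theta_{mu/|mu|}(Pi_mu .), with Pi_mu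
   the projection onto S_0(I) along mu, is a congruent family on M_+(I); on
   P_+(I) and S_0(I) it is Theta, and every tau^P with a singleton block
   vanishes there. *)

From mathcomp Require Import boolp classical_sets reals topology normedtype.
From mathcomp Require Import all_boot all_order all_algebra.
From mathcomp Require Import ring lra.
Set Implicit Arguments. Unset Strict Implicit. Unset Printing Implicit Defensive.
Import Order.TTheory GRing.Theory Num.Theory.
Import numFieldNormedType.Exports ArrowAsUniformType.
Local Open Scope classical_set_scope.
Local Open Scope set_scope.
Local Open Scope ring_scope.

(** * Multilinear forms and canonical tensors *)

Section Multilinear.
Variables (R : realType) (n : nat) (I : finType).
Implicit Types (T : (I -> R) -> Prop) (F G : ('I_n -> I -> R) -> R)
  (V : 'I_n -> I -> R) (k : 'I_n).

Definition multilinear T F :=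
  forall V, (forall j, T (V j)) -> forall k a x y, T x -> T y ->
    F (upd V k (fun i => a * x i + y i)) = a * F (upd V k x) + F (upd V k y).

Definition lin_closed T :=
  T (fun _ => 0) /\ forall a x y, T x -> T y -> T (fun i => a * x i + y i).

Lemma upd_in T V k x : (forall j, T (V j)) -> T x -> forall j, T (upd V k x j).
Proof. by move=> TV Tx j; rewrite /upd; case: eqP. Qed.

Lemma multilinear_sum (J : finType) T F V k (c : J -> R) (b : J -> I -> R) :
  lin_closed T -> multilinear T F -> (forall j, T (V j)) -> (forall r, T (b r)) ->
  F (upd V k (fun i => \sum_r c r * b r i)) = \sum_r c r * F (upd V k (b r)).
Proof.
move=> [T0 TD] linF TV Tb.
have F0 : F (upd V k (fun _ => 0)) = 0.
  have := linF V TV k 1 _ _ T0 T0.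
  have -> : (fun i : I => 1 * 0 + 0) = (fun _ => 0 : R) by apply: funext => i; ring.
  lra.
suff : T (fun i => \sum_r c r * b r i) /\
       F (upd V k (fun i => \sum_r c r * b r i)) = \sum_r c r * F (upd V k (b r)).
  by case.
elim: (index_enum J) => [|r s [Ts IHs]].
  by under eq_fun do rewrite big_nil; rewrite big_nil.
have -> : (fun i => \sum_(r' <- r :: s) c r' * b r' i) =
          (fun i => c r * b r i + \sum_(r' <- s) c r' * b r' i).
  by apply: funext => i; rewrite big_cons.
by split; [exact: TD | rewrite big_cons linF // IHs].
Qed.

Definition delta (i : I) : I -> R := fun i' => (i' == i)%:R.

Lemma delta_decomp (x : I -> R) : x = fun i => \sum_r x r * delta r i.
Proof.
apply: funext => i; rewrite (bigD1 i) //= /delta eqxx mulr1 big1 ?addr0 // => r.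
by rewrite eq_sym => /negbTE ->; rewrite mulr0.
Qed.

Lemma sum_delta (i : I) : \sum_i' delta i i' = 1.
Proof. by rewrite (bigD1 i) //= /delta eqxx big1 ?addr0 // => i' /negbTE ->. Qed.

Lemma multilinear_delta_ext (i0 : I) F G :
  multilinear (@anyvec R I) F -> multilinear (@anyvec R I) G ->
  (forall x : 'I_n -> I, F (fun j => delta (x j)) = G (fun j => delta (x j))) ->
  F =1 G.
Proof.
move=> linF linG FG.
suff H m V (x : 'I_n -> I) :
    (forall j : 'I_n, (m <= j)%N -> V j = delta (x j)) -> F V = G V.
  by move=> V; apply: (H n V (fun _ => i0)) => j; rewrite leqNgt ltn_ord.
elim: m V x => [|m IHm] V x Vx.
  by have -> : V = fun j => delta (x j) by apply: funext => j; apply: Vx.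
have [mn|nm] := ltnP m n; last first.
  by apply: (IHm V x) => j mj; exfalso; move: (leq_trans (ltn_ord j) nm); rewrite ltnNge mj.
pose k := Ordinal mn.
have -> : V = upd V k (fun i => \sum_r V k r * delta r i).
  by apply: funext => j; rewrite /upd -delta_decomp; case: eqP => // ->.
have linT : lin_closed (@anyvec R I) by [].
rewrite !(multilinear_sum _ _ linT) //; apply: eq_bigr => r _; congr (_ * _).
apply: (IHm _ (fun j => if j == k then r else x j)) => j mj; rewrite /upd.
have [//|njk] := eqVneq j k; apply: Vx; rewrite ltn_neqAle mj andbT.
by apply: contra njk => /eqP jm; apply/eqP/val_inj.
Qed.

End Multilinear.

Section CanonicalTensors.
Variables (R : realType) (n : nat) (I : finType).
Implicit Types (mu : I -> R) (V : 'I_n -> I -> R) (B : {set 'I_n}).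

Lemma tau_block_upd_notin B mu V k w :
  k \notin B -> tau_block B mu (upd V k w) = tau_block B mu V.
Proof.
move=> kB; apply: eq_bigr => i _; congr (_ * _); apply: eq_bigr => j jB.
by rewrite /upd ifN //; apply: contraNneq kB => <-.
Qed.

Lemma tau_block_linear B mu V k a x y : k \in B ->
  tau_block B mu (upd V k (fun i => a * x i + y i))
  = a * tau_block B mu (upd V k x) + tau_block B mu (upd V k y).
Proof.
move=> kB; rewrite /tau_block mulr_sumr -big_split; apply: eq_bigr => i _.
rewrite !(bigD1 k kB) /= /upd eqxx.
have offk w : \prod_(j in B | j != k) (if j == k then w else V j) i
              = \prod_(j in B | j != k) V j i.
  by apply: eq_bigr => j /andP[_ /negbTE ->].
rewrite !offk; ring.
Qed.

Lemma tauP_multilinear (P : {set {set 'I_n}}) mu :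
  partition P [set: 'I_n] -> multilinear (@anyvec R I) (tauP P mu).
Proof.
move=> /and3P[/eqP coverP trivP _] V _ k a x y _ _.
have kP : k \in cover P by rewrite coverP inE.
rewrite /tauP !(bigD1 _ (pblock_mem kP)) /=.
have others w : \prod_(B in P | B != pblock P k) tau_block B mu (upd V k w)
                = \prod_(B in P | B != pblock P k) tau_block B mu V.
  apply: eq_bigr => B /andP[BP nBk]; apply: tau_block_upd_notin.
  by apply: contra nBk => kB; rewrite (def_pblock trivP BP kB).
by rewrite !others tau_block_linear ?mem_pblock //; ring.
Qed.

Lemma tauP_comb_multilinear (b : {set {set 'I_n}} -> R) mu :
  multilinear (@anyvec R I)
    (fun V => \sum_(P | partition P [set: 'I_n]) b P * tauP P mu V).
Proof.
move=> V _ k a x y _ _; rewrite mulr_sumr -big_split; apply: eq_bigr => P partP.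
by rewrite (tauP_multilinear mu partP) // mulrDr mulrCA.
Qed.

End CanonicalTensors.

Lemma mnorm_Mplus (R : realType) (I : finType) (mu : I -> R) :
  Mplus mu -> mnorm mu = \sum_i mu i.
Proof. by move=> mu_gt0; apply: eq_bigr => i _; rewrite ger0_norm // ltW. Qed.

Section CongruentKernels.
Variables (R : realType) (I I' : finType) (K : I -> I' -> R) (kappa : I' -> I).
Hypothesis markovK : markov_kernel K.
Hypothesis kappaK : forall i i', kappa i' != i -> K i i' = 0.

Lemma sum_pushK x : \sum_i' pushK K x i' = \sum_i x i.
Proof.
case: markovK => _ K1; rewrite /pushK exchange_big; apply: eq_bigr => i _.
by rewrite -mulr_suml K1 mul1r.
Qed.

Lemma pushK_linear a (x y : I -> R) :
  pushK K (fun i => a * x i + y i) = fun i' => a * pushK K x i' + pushK K y i'.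
Proof.
apply: funext => i'; rewrite /pushK mulr_sumr -big_split /=.
by apply: eq_bigr => i _; ring.
Qed.

Lemma mnorm_pushK mu : Mplus mu -> mnorm (pushK K mu) = mnorm mu.
Proof.
case: (markovK) => K_ge0 _ mu_gt0; rewrite [RHS]mnorm_Mplus // -sum_pushK.
apply: eq_bigr => i' _; rewrite ger0_norm //.
by apply: sumr_ge0 => i _; rewrite mulr_ge0 // ltW.
Qed.

Lemma pushK_congruent x i' : pushK K x i' = K (kappa i') i' * x (kappa i').
Proof.
rewrite /pushK (bigD1 (kappa i')) //= big1 ?addr0 // => i ni.
by rewrite kappaK ?mul0r // eq_sym.
Qed.

Lemma tauP_pushK n (P : {set {set 'I_n}}) mu (V : 'I_n -> I -> R) :
  (forall i', 0 < pushK K mu i') ->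
  tauP P (pushK K mu) (fun j => pushK K (V j)) = tauP P mu V.
Proof.
move=> pushK_gt0; apply: eq_bigr => B _; rewrite /tau_block.
pose f i := mu i ^ (1 - #|B|%:Z) * \prod_(j in B) V j i.
rewrite -[RHS](sum_pushK f); apply: eq_bigr => i' _.
have := pushK_gt0 i'; rewrite !pushK_congruent.
set k := K (kappa i') i' => kmu_gt0.
have k_neq0 : k != 0 by apply: contraTneq kmu_gt0 => ->; rewrite mul0r ltxx.
under eq_bigr do rewrite pushK_congruent.
rewrite big_split /= prodr_const expfzMl /f.
have kk : k ^ (1 - #|B|%:Z) * k ^+ #|B| = k by rewrite exprnP -expfzDr // subrK expr1z.
by rewrite -[in RHS]kk; ring.
Qed.

End CongruentKernels.

(** * Continuity *)

Section Continuity.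
Variable R : realType.

Lemma ball_fctE (I : choiceType) (mu : I -> R) d nu :
  ball mu d nu = (forall i, `|nu i - mu i| < d).
Proof. by apply: propext; split=> H i; have := H i; rewrite /ball /= distrC. Qed.

Lemma cvg_withinP (I : finType) (D : set (I -> R)) (f : (I -> R) -> R) mu :
  f @ within D (nbhs mu) --> f mu <->
  (forall eps, 0 < eps -> exists2 delta, 0 < delta &
     forall nu, D nu -> (forall i, `|nu i - mu i| < delta) -> `|f nu - f mu| < eps).
Proof.
split=> [/cvgrPdist_lt fmu eps /fmu|fmu].
  rewrite near_withinE => /nbhs_ballP[d d_gt0 ballf]; exists d => // nu Dnu.
  by rewrite -ball_fctE => /ballf /(_ Dnu); rewrite distrC.
apply/cvgrPdist_lt => eps /fmu[d d_gt0 ballf]; rewrite near_withinE.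
by apply/nbhs_ballP; exists d => // nu; rewrite ball_fctE => /ballf fnu /fnu; rewrite distrC.
Qed.

Lemma cvg_coordP (T : Type) (I : finType) (F : set_system T) (FF : Filter F)
    (g : T -> I -> R) l :
  g @ F --> l <-> forall i, (fun t => g t i) @ F --> l i.
Proof.
split=> [/cvg_ballP gl i|gl].
  by apply/cvg_ballP => e /gl; apply: filterS => t; apply.
apply/cvg_ballP => e e_gt0.
by apply: filterS (filter_forall FF (fun i => cvg_ball (gl i) e_gt0)) => t.
Qed.

Lemma cvg_within_comp (X Y Z : topologicalType) (D : set X) (E : set Y)
    (g : X -> Y) (f : Y -> Z) x :
  (forall u, D u -> E (g u)) -> g @ within D (nbhs x) --> g x ->
  f @ within E (nbhs (g x)) --> f (g x) ->
  (fun u => f (g u)) @ within D (nbhs x) --> f (g x).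
Proof.
move=> DE gx fgx; apply: (cvg_comp g f _ fgx) => P /gx gP.
by apply: (@filterS _ (nbhs x) _ _ _ _ gP) => u EP Du; apply: EP (DE _ Du).
Qed.

Lemma cvg_coord_within (I : finType) (D : set (I -> R)) mu i :
  (fun nu => nu i) @ within D (nbhs mu) --> mu i.
Proof.
have idmu : (fun nu => nu) @ within D (nbhs mu) --> mu by apply: cvg_within.
by move: idmu => /cvg_coordP; apply.
Qed.

Lemma cvg_exprz (T : Type) (F : set_system T) (FF : Filter F) (f : T -> R) a z :
  a != 0 -> f @ F --> a -> (fun t => f t ^ z) @ F --> a ^ z.
Proof.
have cvgX m : f @ F --> a -> (fun t => f t ^+ m) @ F --> a ^+ m.
  move=> fa; elim: m => [|m IHm].
    by under eq_cvg do rewrite expr0; rewrite expr0; apply: cvg_cst.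
  by under eq_cvg do rewrite exprS; rewrite exprS; apply: cvgM.
move=> a_neq0 fa; case: z => m; first exact: cvgX.
exact: cvgV (expf_neq0 _ a_neq0) (cvgX _ fa).
Qed.

Lemma cvg_within_eq (I : finType) (D : set (I -> R))
    (f g : (I -> R) -> R) (mu : I -> R) (l : R) :
  (forall nu, D nu -> f nu = g nu) ->
  g @ within D (nbhs mu) --> l -> f @ within D (nbhs mu) --> l.
Proof.
move=> fg; apply: cvg_trans; apply: near_eq_cvg; rewrite near_withinE.
by apply: filterE => nu /fg.
Qed.

Lemma eq0_cvg_within_dense (I : finType) (D : set (I -> R))
    (h : (I -> R) -> R) mu :
  h @ within D (nbhs mu) --> h mu ->
  (forall d, 0 < d -> exists2 nu, D nu /\ (forall i, `|nu i - mu i| < d) & h nu = 0) ->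
  h mu = 0.
Proof.
move=> /cvg_withinP hmu approx; apply/eqP; apply: contraT => hmu_neq0.
have hmu_gt0 : 0 < `|h mu| by rewrite normr_gt0.
have [d d_gt0 close] := hmu _ hmu_gt0.
have [nu [Dnu nu_close] hnu0] := approx d d_gt0.
by have := close nu Dnu nu_close; rewrite hnu0 sub0r normrN ltxx.
Qed.

Lemma tauP_cvg (I : finType) n (P : {set {set 'I_n}}) (V : 'I_n -> I -> R) mu :
  Mplus mu -> (fun nu => tauP P nu V) @ within (@Mplus R I) (nbhs mu) --> tauP P mu V.
Proof.
move=> mu_gt0; apply: cvg_big => [|B _]; first exact: mul_continuous.
apply: cvg_big => [|i _]; first exact: add_continuous.
apply: cvgM; last exact: cvg_cst.
by apply: cvg_exprz; [exact: lt0r_neq0 | exact: cvg_coord_within].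
Qed.

End Continuity.

Section MultilinearContinuity.
Variables (R : realType) (n : nat) (I J : finType).
Variables (T : (I -> R) -> Prop) (D : set (I -> R)) (b : J -> I -> R).
Variable F : (I -> R) -> ('I_n -> I -> R) -> R.
Hypothesis T_closed : lin_closed T.
Hypothesis T_b : forall r, T (b r).
Hypothesis F_multilinear : forall nu, D nu -> multilinear T (F nu).
Variable mu : I -> R.
Hypothesis D_mu : D mu.
Hypothesis F_cvg : forall U, (forall j, T (U j)) ->
  (fun nu => F nu U) @ within D (nbhs mu) --> F mu U.

Lemma multilinear_cvg (W : 'I_n -> (I -> R) -> I -> R) (coef : 'I_n -> (I -> R) -> J -> R) :
  (forall j nu, D nu -> T (W j nu)) ->
  (forall j nu, D nu -> W j nu = fun i => \sum_r coef j nu r * b r i) ->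
  (forall j r, (fun nu => coef j nu r) @ within D (nbhs mu) --> coef j mu r) ->
  (fun nu => F nu (fun j => W j nu)) @ within D (nbhs mu) --> F mu (fun j => W j mu).
Proof.
(* Hybrid argument: the first m arguments move with nu, the others stay fixed,
   and each step expands argument m along b. *)
move=> T_W W_decomp coef_cvg.
pose hyb m (U : 'I_n -> I -> R) nu (j : 'I_n) := if (j < m)%N then W j nu else U j.
have T_hyb m U nu : (forall j, T (U j)) -> D nu -> forall j, T (hyb m U nu j).
  by move=> T_U D_nu j; rewrite /hyb; case: ifP => _; [apply: T_W | apply: T_U].
suff hyb_cvg m U : (forall j, T (U j)) ->
    (fun nu => F nu (hyb m U nu)) @ within D (nbhs mu) --> F mu (hyb m U mu).
  have hybn nu : hyb n (fun j => W j mu) nu = fun j => W j nu.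
    by apply: funext => j; rewrite /hyb ltn_ord.
  by have := hyb_cvg n _ (T_W ^~ mu ^~ D_mu); rewrite hybn; under eq_cvg do rewrite hybn.
elim: m U => [|m IHm] U T_U.
  by apply: F_cvg.
have [nm|mn] := leqP n m.
  have hybS nu : hyb m.+1 U nu = hyb m U nu.
    by apply: funext => j; rewrite /hyb !(leq_trans (ltn_ord j)) // ltnW.
  by rewrite hybS; under eq_cvg do rewrite hybS; apply: IHm.
pose k := Ordinal mn.
have hybS r nu : upd (hyb m U nu) k (b r) = hyb m (upd U k (b r)) nu.
  by apply: funext => j; rewrite /hyb /upd; case: eqVneq => // ->; rewrite ltnn.
have expand nu : D nu -> F nu (hyb m.+1 U nu)
    = \sum_r coef k nu r * F nu (hyb m (upd U k (b r)) nu).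
  move=> D_nu; have -> : hyb m.+1 U nu = upd (hyb m U nu) k (W k nu).
    apply: funext => j; rewrite /hyb /upd ltnS leq_eqVlt.
    have [->|njk] := eqVneq j k; first by rewrite eqxx.
    by rewrite (_ : (j == m :> nat) = false) //; apply/negbTE.
  rewrite W_decomp // (multilinear_sum _ _ T_closed (F_multilinear D_nu)) //.
    by under eq_bigr do rewrite hybS.
  by move=> j; apply: T_hyb.
rewrite expand //; apply: (cvg_within_eq expand).
apply: cvg_big => [|r _]; first exact: add_continuous.
by apply: cvgM; [exact: coef_cvg | apply: IHm; apply: upd_in].
Qed.

End MultilinearContinuity.

(** * Partitions and the refinement system *)

Section Partitions.
Variable n : nat.
Implicit Types (P Q : {set {set 'I_n}}).

Definition same_block P : {set 'I_n * 'I_n} :=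
  [set jk | [exists B in P, (jk.1 \in B) && (jk.2 \in B)]].

Definition refines P Q := same_block P \subset same_block Q.

Definition ker_pairs (Z : eqType) (x : 'I_n -> Z) : {set 'I_n * 'I_n} :=
  [set jk | x jk.1 == x jk.2].

Lemma mem_same_block P j k :
  partition P [set: 'I_n] -> ((j, k) \in same_block P) = (k \in pblock P j).
Proof.
move=> /and3P[/eqP coverP trivP _].
have jP : j \in cover P by rewrite coverP inE.
rewrite inE; apply/existsP/idP => [[B /and3P[BP jB kB]]|kBj].
  by rewrite (def_pblock trivP BP jB).
by exists (pblock P j); rewrite pblock_mem // mem_pblock jP.
Qed.

Lemma same_blockE P j k :
  partition P [set: 'I_n] -> ((j, k) \in same_block P) = (pblock P j == pblock P k).
Proof.
move=> partP; have /and3P[/eqP coverP trivP _] := partP.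
by rewrite mem_same_block // eq_pblock // coverP inE.
Qed.

Lemma same_block_preim (Z : eqType) (x : 'I_n -> Z) :
  same_block (preim_partition x [set: 'I_n]) = ker_pairs x.
Proof.
apply/setP => -[j k]; rewrite mem_same_block ?preim_partitionP // inE /=.
rewrite (pblock_equivalence_partition (R := fun a b => x a == x b)) ?inE //.
by move=> a b c _ _ _; split=> //= /eqP ->.
Qed.

Lemma ker_pairs_pblock (Z : eqType) (iota : {set 'I_n} -> Z) Q :
  injective iota -> partition Q [set: 'I_n] ->
  ker_pairs (fun j => iota (pblock Q j)) = same_block Q.
Proof.
move=> iota_inj partQ; apply/setP => -[j k].
by rewrite same_blockE // inE /= (inj_eq iota_inj).
Qed.

Lemma same_block_subset P Q : partition P [set: 'I_n] -> partition Q [set: 'I_n] ->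
  same_block P = same_block Q -> P \subset Q.
Proof.
move=> partP partQ PQ; apply/subsetP => B BP.
have /and3P[_ trivP P0] := partP; have /and3P[/eqP coverQ _ _] := partQ.
have [j jB] : exists j, j \in B by apply/set0Pn; apply: contraNneq P0 => <-.
suff -> : B = pblock Q j by apply: pblock_mem; rewrite coverQ inE.
apply/setP => k.
by rewrite -mem_same_block // -PQ mem_same_block // (def_pblock trivP BP jB).
Qed.

Lemma same_block_inj P Q : partition P [set: 'I_n] -> partition Q [set: 'I_n] ->
  same_block P = same_block Q -> P = Q.
Proof.
move=> partP partQ PQ; apply/eqP.
by rewrite eqEsubset !same_block_subset.
Qed.

Lemma card_same_block_lt P Q : partition P [set: 'I_n] -> partition Q [set: 'I_n] ->
  refines P Q -> P != Q -> (#|same_block P| < #|same_block Q|)%N.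
Proof.
move=> partP partQ PQ; apply: contraNT; rewrite -leqNgt => QP.
by apply/eqP/same_block_inj => //; apply/eqP; rewrite eqEcard QP andbT.
Qed.

Section RefinementSystem.
Variables (R : fieldType) (w : {set {set 'I_n}} -> R).
Hypothesis w_neq0 : forall P, partition P [set: 'I_n] -> w P != 0.

Lemma refinement_system_uniq (u : {set {set 'I_n}} -> R) :
  (forall Q, partition Q [set: 'I_n] ->
     \sum_(P | partition P [set: 'I_n]) u P * w P * (refines P Q)%:R = 0) ->
  forall P, partition P [set: 'I_n] -> u P = 0.
Proof.
move=> usol P; move: {2}#|_|.+1 (ltnSn #|same_block P|) => m.
elim: m P => [//|m IHm] P ltPm partP.
have := usol P partP; rewrite (bigD1 P) //= big1 ?addr0.
  rewrite /refines subxx mulr1 => /eqP.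
  by rewrite mulf_eq0 (negbTE (w_neq0 partP)) orbF => /eqP.
move=> P' /andP[partP' nP'P]; have [P'P|] := boolP (refines P' P); last by rewrite mulr0.
by rewrite IHm ?mul0r // -ltnS (leq_trans _ ltPm) // ltnS card_same_block_lt.
Qed.

(* The identity outside partitions, so that the matrix indexed by all of
   {set {set 'I_n}} is invertible. *)
Definition refinement_matrix P Q : R :=
  if partition P [set: 'I_n] && partition Q [set: 'I_n]
  then w P * (refines P Q)%:R else (P == Q)%:R.

Lemma sum_refinement_matrix (u : {set {set 'I_n}} -> R) Q :
  \sum_P u P * refinement_matrix P Q =
  if partition Q [set: 'I_n]
  then \sum_(P | partition P [set: 'I_n]) u P * w P * (refines P Q)%:R
  else u Q.
Proof.
rewrite /refinement_matrix; case: ifP => partQ.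
  rewrite (bigID (fun P => partition P [set: 'I_n])) /= [X in _ + X]big1 ?addr0.
    by apply: eq_bigr => P ->; rewrite mulrA.
  move=> P nP; rewrite (negbTE nP) /=.
  by rewrite (_ : P == Q = false) ?mulr0 //; apply: contraNF nP => /eqP ->.
rewrite (bigD1 Q) //= big1 ?addr0; first by rewrite andbF eqxx mulr1.
by move=> P nPQ; rewrite andbF (negbTE nPQ) mulr0.
Qed.

Lemma refinement_system_solvable (g : {set {set 'I_n}} -> R) :
  exists b : {set {set 'I_n}} -> R, forall Q, partition Q [set: 'I_n] ->
    \sum_(P | partition P [set: 'I_n]) b P * w P * (refines P Q)%:R = g Q.
Proof.
pose A : 'M[R]_#|{set {set 'I_n}}| :=
  \matrix_(i, j) refinement_matrix (enum_val i) (enum_val j).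
have mulAE (v : 'rV_#|{set {set 'I_n}}|) Q :
    (v *m A) 0 (enum_rank Q) = \sum_P v 0 (enum_rank P) * refinement_matrix P Q.
  rewrite mxE (reindex enum_rank) /=; last by apply: onW_bij; apply: enum_rank_bij.
  by apply: eq_bigr => P _; rewrite /A mxE !enum_rankK.
have A_unit : A \in unitmx.
  rewrite -row_free_unit; apply/inj_row_free => v vA0; apply/rowP => i.
  rewrite mxE -[i]enum_valK; set P := enum_val i.
  have sum0 Q : \sum_P v 0 (enum_rank P) * refinement_matrix P Q = 0.
    by rewrite -mulAE vA0 mxE.
  have [partP|npartP] := boolP (partition P [set: 'I_n]); last first.
    by have := sum0 P; rewrite sum_refinement_matrix (negbTE npartP).
  apply: (refinement_system_uniq (u := fun P => v 0 (enum_rank P))) => // Q partQ.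
  by have := sum0 Q; rewrite sum_refinement_matrix partQ.
pose gr : 'rV[R]_#|{set {set 'I_n}}| :=
  \row_j (if partition (enum_val j) [set: 'I_n] then g (enum_val j) else 0).
exists (fun P => (gr *m invmx A) 0 (enum_rank P)) => Q partQ.
have := mulAE (gr *m invmx A) Q; rewrite mulmxKV // sum_refinement_matrix partQ.
by rewrite mxE enum_rankK partQ => <-.
Qed.

End RefinementSystem.

Lemma injective_extension (Z : finType) (A : {set Z}) (h : Z -> Z) :
  {in A &, injective h} -> exists2 s : Z -> Z, injective s & {in A, s =1 h}.
Proof.
move=> h_inj; set B := h @: A.
have cardAB : #|~: A| = #|~: B|.
  by apply/eqP; rewrite -(eqn_add2l #|A|) cardsC -{1}(card_in_imset h_inj) cardsC.
pose s z := if z \in A then h z else nth z (enum (~: B)) (index z (enum (~: A))).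
have s_out z : z \notin A ->
    (index z (enum (~: A)) < size (enum (~: B)))%N /\ s z \in ~: B.
  move=> zA; rewrite /s (negbTE zA).
  have lt : (index z (enum (~: A)) < size (enum (~: B)))%N.
    by rewrite -!cardE -cardAB cardE index_mem mem_enum inE.
  by split=> //; rewrite -mem_enum mem_nth.
exists s => [z1 z2|z zA]; last by rewrite /s zA.
have [z1A|z1A] := boolP (z1 \in A); have [z2A|z2A] := boolP (z2 \in A).
- by rewrite /s z1A z2A; apply: h_inj.
- by have [_] := s_out z2 z2A; move=> + e; rewrite -e /s z1A inE imset_f.
- by have [_] := s_out z1 z1A; move=> + e; rewrite e /s z2A inE imset_f.
have [lt1 _] := s_out z1 z1A; have [lt2 _] := s_out z2 z2A.
rewrite /s (negbTE z1A) (negbTE z2A) (set_nth_default z1 z2 lt2) => /eqP.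
rewrite nth_uniq ?enum_uniq // => /eqP eq_index.
have m1 : z1 \in enum (~: A) by rewrite mem_enum inE.
have m2 : z2 \in enum (~: A) by rewrite mem_enum inE.
by rewrite -(nth_index z1 m1) eq_index (set_nth_default z2 z1) ?index_mem // nth_index.
Qed.

Lemma same_kernel_perm (Z : finType) (x y : 'I_n -> Z) :
  ker_pairs x = ker_pairs y -> exists2 s : Z -> Z, injective s & forall j, s (x j) = y j.
Proof.
move=> kerxy.
have xy j k : (x j == x k) = (y j == y k).
  by move/setP: kerxy => /(_ (j, k)); rewrite !inE.
pose h z := if [pick j | x j == z] is Some j then y j else z.
have hx j : h (x j) = y j.
  rewrite /h; case: pickP => [j' /eqP e|/(_ j)]; last by rewrite eqxx.
  by apply/eqP; rewrite -xy e.
have : {in [set x j | j : 'I_n] &, injective h}.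
  by move=> _ _ /imsetP[j1 _ ->] /imsetP[j2 _ ->]; rewrite !hx => e; apply/eqP; rewrite xy e.
case/injective_extension => s s_inj sh; exists s => // j.
by rewrite sh ?hx // imset_f.
Qed.

End Partitions.

(** * Congruent families on M_+ *)

Lemma prod_nat_forall (R : comRingType) (T : finType) (A : {pred T}) (b : pred T) :
  \prod_(t in A) (b t)%:R = [forall t in A, b t]%:R :> R.
Proof.
have [allb|] := boolP [forall t in A, b t].
  by rewrite big1 // => t tA; move/forall_inP: allb => /(_ t tA) ->.
rewrite negb_forall => /existsP[t]; rewrite negb_imply => /andP[tA /negbTE bt].
by rewrite (bigD1 t) //= bt mul0r.
Qed.

Section TensorsAtDeltas.
Variables (R : realType) (n : nat) (Z : finType).
Implicit Types (B : {set 'I_n}) (P : {set {set 'I_n}}) (x : 'I_n -> Z).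

Definition uniform (v : R) : Z -> R := fun _ => v.

Lemma uniform_Mplus v : 0 < v -> Mplus (uniform v).
Proof. by move=> v_gt0 z. Qed.

Definition weight (v : R) P : R := \prod_(B in P) v ^ (1 - #|B|%:Z).

Lemma weight_neq0 v P : 0 < v -> weight v P != 0.
Proof. by move=> v_gt0; apply: lt0r_neq0; apply: prodr_gt0 => B _; apply: exprz_gt0. Qed.

Lemma tau_block_delta v B x : B != set0 ->
  tau_block B (uniform v) (fun j => delta R (x j))
  = v ^ (1 - #|B|%:Z) * [forall j in B, forall k in B, x j == x k]%:R.
Proof.
case/set0Pn => j0 j0B; rewrite /tau_block /uniform -mulr_sumr; congr (_ * _).
rewrite (bigD1 (x j0)) //= [X in _ + X]big1 ?addr0 => [|i xi]; last first.
  by rewrite (bigD1 j0) //= /delta (negbTE xi) mul0r.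
rewrite prod_nat_forall; congr ((nat_of_bool _)%:R).
apply/idP/idP => /forall_inP xB; apply/forall_inP => j jB.
  by apply/forall_inP => k kB; rewrite -(eqP (xB j jB)) -(eqP (xB k kB)).
by move/forall_inP: (xB j0 j0B) => /(_ j jB).
Qed.

Lemma same_block_sub_ker P x :
  (same_block P \subset ker_pairs x)
  = [forall B in P, [forall j in B, forall k in B, x j == x k]].
Proof.
apply/subsetP/forall_inP => [sub B BP|xP [j k]].
  apply/forall_inP => j jB; apply/forall_inP => k kB.
  by have := sub (j, k); rewrite !inE => ->//; apply/existsP; exists B; rewrite BP jB kB.
rewrite !inE => /existsP[B /and3P[BP jB kB]].
by move/forall_inP: (xP B BP) => /(_ j jB) /forall_inP /(_ k kB).
Qed.

Lemma tauP_delta v P x : partition P [set: 'I_n] ->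
  tauP P (uniform v) (fun j => delta R (x j))
  = weight v P * (same_block P \subset ker_pairs x)%:R.
Proof.
move=> partP; rewrite same_block_sub_ker -prod_nat_forall -big_split /=.
apply: eq_bigr => B BP; apply: tau_block_delta.
by apply: contraTneq BP => ->; rewrite (partition0 partP).
Qed.

End TensorsAtDeltas.

Section Normalization.
Variables (R : realType) (I : finType).
Implicit Types (mu nu : I -> R).

Definition normalize mu : I -> R := fun i => mu i / \sum_j mu j.

Lemma sum_Mplus_gt0 mu : (0 < #|I|)%N -> Mplus mu -> 0 < \sum_i mu i.
Proof.
move=> /card_gt0P[i0 _] mu_gt0; rewrite (bigD1 i0) //= ltr_pwDl //.
by apply: sumr_ge0 => i _; apply: ltW.
Qed.

Lemma sum_normalize mu : (0 < #|I|)%N -> Mplus mu -> \sum_i normalize mu i = 1.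
Proof. by move=> I0 mu_gt0; rewrite -mulr_suml divff // lt0r_neq0 // sum_Mplus_gt0. Qed.

Lemma normalize_Pplus mu : (0 < #|I|)%N -> Mplus mu -> Pplus (normalize mu).
Proof.
move=> I0 mu_gt0; split; last exact: sum_normalize.
by move=> i; rewrite divr_gt0 // sum_Mplus_gt0.
Qed.

Lemma normalize_cvg mu i : (0 < #|I|)%N -> Mplus mu ->
  (fun nu => normalize nu i) @ within (@Mplus R I) (nbhs mu) --> normalize mu i.
Proof.
move=> I0 mu_gt0; apply: cvgM; first exact: cvg_coord_within.
apply: cvgV; first by rewrite lt0r_neq0 // sum_Mplus_gt0.
by apply: cvg_big => [|j _]; [exact: add_continuous | exact: cvg_coord_within].
Qed.

Lemma normalize_mulr mu t : t != 0 -> normalize (fun i => mu i * t) = normalize mu.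
Proof.
move=> t_neq0; apply: funext => i.
by rewrite /normalize -mulr_suml invfM mulrACA divff // mulr1.
Qed.

Lemma rational_approx mu d : Mplus mu -> 0 < d ->
  exists (N : nat) (k : I -> nat), [/\ (0 < N)%N, (forall i, 0 < k i)%N &
    forall i, `|(k i)%:R / N%:R - mu i| < d].
Proof.
move=> mu_gt0 d_gt0.
(* N exceeds 1/d and every 1/mu_i, so k_i := floor (N mu_i) is positive and
   |k_i/N - mu_i| < 1/N < d. *)
pose N := (Num.truncn (d^-1 + \sum_i (mu i)^-1)).+1.
have invmu_ge0 i : 0 <= (mu i)^-1 by rewrite invr_ge0 ltW.
have N_gt : d^-1 + \sum_i (mu i)^-1 < N%:R.
  by rewrite truncnS_gt // addr_ge0 ?invr_ge0 ?ltW //; apply: sumr_ge0.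
have N_gt0 : 0 < N%:R :> R by rewrite ltr0n.
have dN_gt1 : 1 < d * N%:R.
  rewrite -[X in X < _](mulfV (lt0r_neq0 d_gt0)) ltr_pM2l //; apply: (le_lt_trans _ N_gt).
  by rewrite lerDl; apply: sumr_ge0.
have Nmu_gt1 i : 1 < N%:R * mu i.
  rewrite -[X in X < _](mulVf (lt0r_neq0 (mu_gt0 i))) ltr_pM2r //; apply: (le_lt_trans _ N_gt).
  rewrite (bigD1 i) //= addrCA lerDl.
  by apply: addr_ge0; [rewrite invr_ge0 ltW | exact: sumr_ge0].
exists N, (fun i => Num.truncn (N%:R * mu i)); split=> // i.
  by rewrite truncn_ge_nat // ltW // (lt_trans ltr01).
have /andP[lo hi] := truncn_itv (ltW (lt_trans ltr01 (Nmu_gt1 i))).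
rewrite -natr1 in hi; set t := (Num.truncn _)%:R in lo hi *.
have -> : t / N%:R - mu i = (t - N%:R * mu i) / N%:R by field; apply: lt0r_neq0.
rewrite normrM normfV (gtr0_norm N_gt0) ltr_pdivrMr // distrC ger0_norm; lra.
Qed.

End Normalization.

Section SplitKernel.
Variables (R : realType) (A W : finType) (pr : W -> A) (m : A -> nat).
Hypothesis m_gt0 : forall a, (0 < m a)%N.
Hypothesis card_fiber : forall a, \sum_u (pr u == a)%:R = (m a)%:R :> R.

Definition split_kernel (a : A) (u : W) : R := (pr u == a)%:R / (m a)%:R.

Lemma split_kernel_congruent : congruent_kernel split_kernel.
Proof.
have m_neq0 a : (m a)%:R != 0 :> R by rewrite pnatr_eq0 -lt0n.
split; last by exists pr => a u /negbTE pru; rewrite /split_kernel pru mul0r.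
split=> [a u|a]; first by rewrite divr_ge0.
by rewrite -mulr_suml card_fiber divff.
Qed.

Lemma pushK_split_kernel (x : A -> R) :
  pushK split_kernel x = fun u => x (pr u) / (m (pr u))%:R.
Proof.
apply: funext => u; rewrite /pushK (bigD1 (pr u)) //= big1 ?addr0 => [|a /negbTE pua].
  by rewrite /split_kernel eqxx mul1r mulrC.
by rewrite /split_kernel eq_sym pua mul0r mul0r.
Qed.

Lemma split_kernel_Mplus mu : Mplus mu -> Mplus (pushK split_kernel mu).
Proof. by move=> mu_gt0 u; rewrite pushK_split_kernel divr_gt0 ?ltr0n. Qed.

End SplitKernel.

Section CongruentFamilyCoefficients.
Variables (R : realType) (n : nat).
Variable Th : forall I : finType, (I -> R) -> ('I_n -> I -> R) -> R.
Arguments Th {I}.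
Hypothesis Th_field :
  forall I : finType, (0 < #|I|)%N -> tensor_field (@Mplus R I) (@anyvec R I) (@Th I).
Hypothesis Th_congr : congruent_family (@Mplus R) (@anyvec R) (@Th).

Local Notation partitions := {set {set 'I_n}}.

Definition has_coeffs (I : finType) (mu : I -> R) (b : partitions -> R) :=
  forall V, Th mu V = \sum_(P | partition P [set: 'I_n]) b P * tauP P mu V.

Lemma eq_has_coeffs (I : finType) (mu : I -> R) (b b' : partitions -> R) :
  (forall P, partition P [set: 'I_n] -> b P = b' P) ->
  has_coeffs mu b -> has_coeffs mu b'.
Proof. by move=> bb' coeffs V; rewrite coeffs; apply: eq_bigr => P /bb' ->. Qed.

Lemma has_coeffs_pull (I I' : finType) (K : I -> I' -> R) mu b :
  (0 < #|I|)%N -> (0 < #|I'|)%N -> congruent_kernel K ->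
  (forall nu, Mplus nu -> Mplus (pushK K nu)) -> Mplus mu ->
  has_coeffs (pushK K mu) b -> has_coeffs mu b.
Proof.
move=> I0 I'0 congrK Kpos mu_gt0 coeffs V.
rewrite -(Th_congr I0 I'0 congrK Kpos mu_gt0) // coeffs.
have [markovK [kappa kappaK]] := congrK.
by apply: eq_bigr => P _; rewrite (tauP_pushK markovK kappaK) //; apply: Kpos.
Qed.

Lemma Th_delta_perm (Z : finType) (v : R) (s : Z -> Z) (x : 'I_n -> Z) :
  (0 < #|Z|)%N -> injective s -> 0 < v ->
  Th (uniform v) (fun j => delta R (s (x j))) = Th (uniform v) (fun j => delta R (x j)).
Proof.
(* s acts as the split kernel along its inverse, whose fibres are singletons. *)
move=> Z0 s_inj v_gt0; have [sinv sK Ks] := injF_bij s_inj.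
have sinvE u a : (sinv u == a) = (u == s a) by apply/eqP/eqP => [<-|->].
have fiber a : \sum_u (sinv u == a)%:R = 1 :> R.
  by rewrite -[RHS](sum_delta R (s a)); apply: eq_bigr => u _; rewrite sinvE.
have one_gt0 : forall a : Z, (0 < 1)%N by [].
have := Th_congr Z0 Z0 (split_kernel_congruent one_gt0 fiber)
  (@split_kernel_Mplus R _ _ sinv _ one_gt0) (uniform_Mplus v_gt0)
  (V := fun j => delta R (x j)) (fun _ => Logic.I).
rewrite pushK_split_kernel; congr (Th _ _ = _).
  by apply: funext => u; rewrite /uniform divr1.
by apply: funext => j; apply: funext => u; rewrite pushK_split_kernel /delta sinvE divr1.
Qed.

Lemma Th_cvg (I : finType) (V : 'I_n -> I -> R) mu : (0 < #|I|)%N -> Mplus mu ->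
  (fun nu => Th nu V) @ within (@Mplus R I) (nbhs mu) --> Th mu V.
Proof. by move=> I0 mu_gt0; apply/cvg_withinP; apply: (Th_field I0).2. Qed.

Lemma Th_delta_pblock (Z : finType) (iota : {set 'I_n} -> Z) v (x : 'I_n -> Z) :
  injective iota -> 0 < v ->
  Th (uniform v) (fun j => delta R (x j))
  = Th (uniform v) (fun j => delta R (iota (pblock (preim_partition x [set: 'I_n]) j))).
Proof.
move=> iota_inj v_gt0; have Z0 : (0 < #|Z|)%N by apply/card_gt0P; exists (iota set0).
set Q := preim_partition x [set: 'I_n].
have [s s_inj sx] : exists2 s : Z -> Z, injective s & forall j, s (iota (pblock Q j)) = x j.
  by apply: same_kernel_perm; rewrite ker_pairs_pblock ?preim_partitionP ?same_block_preim.
by rewrite -[RHS](Th_delta_perm (fun j => iota (pblock Q j)) Z0 s_inj v_gt0);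
  congr (Th _ _); apply: funext => j; rewrite sx.
Qed.

Lemma has_coeffs_uniform_exists (Z : finType) (iota : {set 'I_n} -> Z) v :
  injective iota -> 0 < v -> exists b, has_coeffs (uniform v : Z -> R) b.
Proof.
move=> iota_inj v_gt0; have Z0 : (0 < #|Z|)%N by apply/card_gt0P; exists (iota set0).
pose g Q := Th (uniform v) (fun j => delta R (iota (pblock Q j))).
have [b bsol] := refinement_system_solvable (fun P _ => weight_neq0 P v_gt0) g.
exists b; apply: (multilinear_delta_ext (iota set0)).
- exact: (Th_field Z0).1 _ (uniform_Mplus v_gt0).
- exact: tauP_comb_multilinear.
move=> x; rewrite (Th_delta_pblock _ iota_inj v_gt0) -/(g _) -bsol ?preim_partitionP //.
by apply: eq_bigr => P partP; rewrite tauP_delta // /refines same_block_preim mulrA.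
Qed.

Lemma has_coeffs_uniform_uniq (Z : finType) (iota : {set 'I_n} -> Z) v b b' :
  injective iota -> 0 < v ->
  has_coeffs (uniform v : Z -> R) b -> has_coeffs (uniform v : Z -> R) b' ->
  forall P, partition P [set: 'I_n] -> b P = b' P.
Proof.
move=> iota_inj v_gt0 coeffs coeffs' P partP; apply/eqP; rewrite -subr_eq0; apply/eqP.
move: P partP; apply: (refinement_system_uniq (u := fun P => b P - b' P)
  (fun P _ => weight_neq0 P v_gt0)) => Q partQ.
have := coeffs (fun j => delta R (iota (pblock Q j))).
rewrite coeffs' => /eqP; rewrite eq_sym -subr_eq0 -sumrB => /eqP sum0.
rewrite -[RHS]sum0; apply: eq_bigr => P partP.
by rewrite tauP_delta // ker_pairs_pblock //; ring.
Qed.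

(* Y is the reference set: the blocks of every partition embed into it. *)
Local Notation Y := {set 'I_n}.

Lemma coeffs_exist : exists a : R -> partitions -> R,
  forall c, 0 < c -> has_coeffs (uniform (c / #|{: Y}|%:R) : Y -> R) (a c).
Proof.
have Y_gt0 : 0 < #|{: Y}|%:R :> R by rewrite ltr0n; apply/card_gt0P; exists set0.
pose coeffs_at c b := 0 < c -> has_coeffs (uniform (c / #|{: Y}|%:R) : Y -> R) b.
suff [a Ha] : {a : R -> partitions -> R & forall c, coeffs_at c (a c)} by exists a.
apply: choice => c; have [c_gt0|c_le0] := ltrP 0 c; last first.
  by exists (fun _ => 0) => c_gt0; move: (lt_le_trans c_gt0 c_le0); rewrite ltxx.
have [b coeffs] := has_coeffs_uniform_exists (@inj_id Y) (divr_gt0 c_gt0 Y_gt0).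
by exists b.
Qed.

Section Transport.
Variable a : R -> partitions -> R.
Hypothesis a_coeffs :
  forall c, 0 < c -> has_coeffs (uniform (c / #|{: Y}|%:R) : Y -> R) (a c).

Lemma has_coeffs_uniform (Z : finType) v : (0 < #|Z|)%N -> 0 < v ->
  has_coeffs (uniform v : Z -> R) (a (v * #|Z|%:R)).
Proof.
(* Z and Y are both quotients of Z * Y with fibres of constant size; the
   coefficients pulled back along the two projections coincide. *)
move=> Z0 v_gt0; have /card_gt0P[z0 _] := Z0.
have Y0 : (0 < #|{: Y}|)%N by apply/card_gt0P; exists set0.
have W0 : (0 < #|{: Z * Y}|)%N by apply/card_gt0P; exists (z0, set0).
have Z_gt0 : 0 < #|Z|%:R :> R by rewrite ltr0n.
have Y_gt0 : 0 < #|{: Y}|%:R :> R by rewrite ltr0n.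
have iota_inj : injective (fun S : Y => (z0, S)) by move=> S1 S2 [].
have [b coeffs] := has_coeffs_uniform_exists iota_inj (divr_gt0 v_gt0 Y_gt0).
have fiber2 S : \sum_(u : Z * Y) (u.2 == S)%:R = #|Z|%:R :> R.
  rewrite -(pair_bigA _ (fun _ S' => (S' == S)%:R)) /=.
  by rewrite (eq_bigr (fun _ => 1)) ?sumr_const // => z _; apply: sum_delta.
have fiber1 z : \sum_(u : Z * Y) (u.1 == z)%:R = #|{: Y}|%:R :> R.
  rewrite -(pair_bigA _ (fun z' _ => (z' == z)%:R)) exchange_big /=.
  by rewrite (eq_bigr (fun _ => 1)) ?sumr_const // => S _; apply: sum_delta.
set c := v * #|Z|%:R.
have c_gt0 : 0 < c by rewrite mulr_gt0.
have coeffsY : has_coeffs (uniform (c / #|{: Y}|%:R) : Y -> R) b.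
  apply: (has_coeffs_pull Y0 W0 (split_kernel_congruent (fun _ => Z0) fiber2)
    (split_kernel_Mplus _ (fun _ => Z0)) (uniform_Mplus (divr_gt0 c_gt0 Y_gt0))).
  rewrite pushK_split_kernel (_ : (fun u => _) = uniform (v / #|{: Y}|%:R)) //.
  by apply: funext => u; rewrite /uniform /c; field; rewrite !gt_eqF.
apply: (eq_has_coeffs (has_coeffs_uniform_uniq (@inj_id Y) _ coeffsY (a_coeffs c_gt0))).
  exact: divr_gt0.
apply: (has_coeffs_pull Z0 W0 (split_kernel_congruent (fun _ => Y0) fiber1)
  (split_kernel_Mplus _ (fun _ => Y0)) (uniform_Mplus v_gt0)).
by rewrite pushK_split_kernel.
Qed.

Lemma has_coeffs_rational (I : finType) (c : R) (k : I -> nat) :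
  (0 < #|I|)%N -> 0 < c -> (forall i, 0 < k i)%N ->
  has_coeffs (fun i => c * (k i)%:R) (a (mnorm (fun i => c * (k i)%:R))).
Proof.
move=> I0 c_gt0 k_gt0; have /card_gt0P[i0 _] := I0.
pose W := {i : I & 'I_(k i)}.
have W0 : (0 < #|{: W}|)%N.
  by apply/card_gt0P; exists (@Tagged I i0 (fun i => 'I_(k i)) (Ordinal (k_gt0 i0))).
have fiber i : \sum_(u : W) (tag u == i)%:R = (k i)%:R :> R.
  transitivity (\sum_i' \sum_(j : 'I_(k i')) (i' == i)%:R : R).
    by rewrite (sig_big_dep (fun _ => true) (fun _ _ => true)
      (fun i' (_ : 'I_(k i')) => (i' == i)%:R : R)).
  rewrite (bigD1 i) //= [X in _ + X]big1 ?addr0; first by rewrite eqxx sumr_const card_ord.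
  by move=> i' /negbTE ->; rewrite big1.
set mu := fun i => c * (k i)%:R.
have mu_gt0 : Mplus mu by move=> i; rewrite mulr_gt0 ?ltr0n.
pose K := split_kernel R (@tag I (fun i => 'I_(k i))) k.
have congrK : congruent_kernel K := split_kernel_congruent k_gt0 fiber.
have split : pushK K mu = uniform c.
  by rewrite pushK_split_kernel; apply: funext => u; rewrite mulfK ?pnatr_eq0 -?lt0n.
rewrite -(mnorm_pushK congrK.1 mu_gt0) split.
have -> : mnorm (uniform c : W -> R) = c * #|{: W}|%:R.
  by rewrite /mnorm /uniform sumr_const gtr0_norm // mulr_natr.
apply: (has_coeffs_pull I0 W0 congrK (split_kernel_Mplus _ k_gt0) mu_gt0).
by rewrite split; apply: has_coeffs_uniform.
Qed.

Lemma has_coeffs_normalize_rational (I : finType) (c : R) (k : I -> nat) :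
  (0 < #|I|)%N -> 0 < c -> (forall i, 0 < k i)%N ->
  has_coeffs (fun i => c * normalize (fun j => (k j)%:R) i) (a c).
Proof.
move=> I0 c_gt0 k_gt0.
have k_Mplus : Mplus (fun j => (k j)%:R : R) by move=> j; rewrite ltr0n.
have sumk_gt0 := sum_Mplus_gt0 I0 k_Mplus.
have -> : (fun i => c * normalize (fun j => (k j)%:R) i)
          = (fun i => c / (\sum_j (k j)%:R) * (k i)%:R).
  by apply: funext => i; rewrite /normalize mulrA mulrAC.
have := has_coeffs_rational I0 (divr_gt0 c_gt0 sumk_gt0) k_gt0.
rewrite mnorm_Mplus => [|i]; last by rewrite mulr_gt0 ?divr_gt0 ?ltr0n.
by rewrite -mulr_sumr mulfVK ?gt_eqF.
Qed.

Lemma has_coeffs_Mplus (I : finType) (mu : I -> R) :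
  (0 < #|I|)%N -> Mplus mu -> has_coeffs mu (a (mnorm mu)).
Proof.
(* nu |-> c * normalize nu fixes mu and sends every rational point to a
   measure c' * k of mass c, where the formula is known. *)
move=> I0 mu_gt0 V; set c := mnorm mu.
have c_gt0 : 0 < c by rewrite /c mnorm_Mplus // sum_Mplus_gt0.
pose g (nu : I -> R) : I -> R := fun i => c * normalize nu i.
have g_Mplus nu : Mplus nu -> Mplus (g nu).
  by move=> nu_gt0 i; rewrite mulr_gt0 // (normalize_Pplus I0 nu_gt0).1.
have gmu : g mu = mu.
  by apply: funext => i; rewrite /g /normalize -mnorm_Mplus // mulrC divfK ?gt_eqF.
have g_cvg : g @ within (@Mplus R I) (nbhs mu) --> g mu.
  by apply/cvg_coordP => i; apply: cvgM; [exact: cvg_cst | exact: normalize_cvg].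
pose F nu := \sum_(P | partition P [set: 'I_n]) a c P * tauP P nu V.
have Th_g : (fun nu => Th (g nu) V) @ within (@Mplus R I) (nbhs mu) --> Th (g mu) V.
  apply: (cvg_within_comp (f := fun nu => Th nu V) g_Mplus g_cvg).
  by apply: Th_cvg; rewrite ?gmu.
have F_g : (fun nu => F (g nu)) @ within (@Mplus R I) (nbhs mu) --> F (g mu).
  apply: (cvg_within_comp (f := F) g_Mplus g_cvg).
  apply: cvg_big => [|P _]; first exact: add_continuous.
  by apply: cvgM; [exact: cvg_cst | apply: tauP_cvg; rewrite gmu].
suff : Th (g mu) V - F (g mu) = 0 by rewrite gmu => /eqP; rewrite subr_eq0 => /eqP.
have h_cvg : (fun nu => Th (g nu) V - F (g nu)) @ within (@Mplus R I) (nbhs mu)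
    --> Th (g mu) V - F (g mu) by apply: cvgB.
apply: (eq0_cvg_within_dense h_cvg).
move=> d d_gt0; have [N [k [N_gt0 k_gt0 k_close]]] := rational_approx mu_gt0 d_gt0.
exists (fun i => (k i)%:R / N%:R).
  by split=> // i; rewrite divr_gt0 ?ltr0n.
rewrite /F /g normalize_mulr ?invr_eq0 ?pnatr_eq0 -?lt0n //.
by rewrite has_coeffs_normalize_rational // subrr.
Qed.

End Transport.

Lemma coeffs_of_congruent_Mplus : exists a : partitions -> R -> R,
  forall I : finType, (0 < #|I|)%N -> forall mu : I -> R, Mplus mu ->
  forall V, Th mu V = \sum_(P | partition P [set: 'I_n]) a P (mnorm mu) * tauP P mu V.
Proof.
have [a a_coeffs] := coeffs_exist.
by exists (fun P c => a c P) => I I0 mu mu_gt0; apply: has_coeffs_Mplus.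
Qed.

End CongruentFamilyCoefficients.

Lemma congruent_of_coeffs_Mplus (R : realType) (n : nat)
    (Th : forall I : finType, (I -> R) -> ('I_n -> I -> R) -> R)
    (a : {set {set 'I_n}} -> R -> R) :
  (forall I : finType, (0 < #|I|)%N -> forall mu : I -> R, Mplus mu -> forall V,
     Th I mu V = \sum_(P | partition P [set: 'I_n]) a P (mnorm mu) * tauP P mu V) ->
  congruent_family (@Mplus R) (@anyvec R) Th.
Proof.
move=> coeffs I I' I0 I'0 K [markovK [kappa kappaK]] K_Mplus mu mu_gt0 V _.
rewrite (coeffs I' I'0 _ (K_Mplus _ mu_gt0)) (coeffs I I0 _ mu_gt0).
rewrite (mnorm_pushK markovK mu_gt0).
by apply: eq_bigr => P _; rewrite (tauP_pushK markovK kappaK) //; apply: K_Mplus.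
Qed.

(** * Congruent families on P_+ *)

Section Projection.
Variables (R : realType) (I : finType).
Implicit Types (mu x : I -> R).

Definition projS0 mu x : I -> R := fun i => x i - (\sum_j x j) * normalize mu i.

Lemma S0_lin_closed : lin_closed (@S0 R I).
Proof.
split=> [|a x y Sx Sy]; first by rewrite /S0 big1.
by rewrite /S0 big_split /= -mulr_sumr Sx Sy mulr0 addr0.
Qed.

Lemma S0_projS0 mu x : (0 < #|I|)%N -> Mplus mu -> S0 (projS0 mu x).
Proof.
by move=> I0 mu_gt0; rewrite /S0 /projS0 sumrB -mulr_sumr sum_normalize // mulr1 subrr.
Qed.

Lemma projS0_linear mu a x y :
  projS0 mu (fun i => a * x i + y i) = fun i => a * projS0 mu x i + projS0 mu y i.
Proof. by apply: funext => i; rewrite /projS0 big_split /= -mulr_sumr; ring. Qed.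

Lemma projS0_id mu x : S0 x -> projS0 mu x = x.
Proof. by move=> Sx; apply: funext => i; rewrite /projS0 Sx mul0r subr0. Qed.

Lemma normalize_Pplus_id mu : Pplus mu -> normalize mu = mu.
Proof. by case=> _ mu1; apply: funext => i; rewrite /normalize mu1 divr1. Qed.

Lemma S0_decomp (i0 : I) x : S0 x -> x = fun i => \sum_r x r * (delta R r i - delta R i0 i).
Proof.
move=> Sx; apply: funext => i; under eq_bigr do rewrite mulrBr.
by rewrite sumrB -mulr_suml Sx mul0r subr0 {1}(delta_decomp x).
Qed.

Lemma projS0_cvg mu x i : (0 < #|I|)%N -> Mplus mu ->
  (fun nu => projS0 nu x i) @ within (@Mplus R I) (nbhs mu) --> projS0 mu x i.
Proof.
move=> I0 mu_gt0; apply: cvgB; first exact: cvg_cst.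
by apply: cvgM; [exact: cvg_cst | exact: normalize_cvg].
Qed.

End Projection.

Section ProjectionPushK.
Variables (R : realType) (I I' : finType) (K : I -> I' -> R).
Hypothesis markovK : markov_kernel K.

Lemma pushK_normalize mu : pushK K (normalize mu) = normalize (pushK K mu).
Proof.
apply: funext => i'.
by rewrite /normalize sum_pushK // /pushK mulr_suml; apply: eq_bigr => i _; rewrite mulrA.
Qed.

Lemma pushK_projS0 mu x : pushK K (projS0 mu x) = projS0 (pushK K mu) (pushK K x).
Proof.
rewrite /projS0 sum_pushK // -pushK_normalize.
have -> : (fun i => x i - (\sum_j x j) * normalize mu i)
          = (fun i => - (\sum_j x j) * normalize mu i + x i).
  by apply: funext => i; rewrite mulNr addrC.
by rewrite pushK_linear; apply: funext => i'; rewrite mulNr addrC.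
Qed.

End ProjectionPushK.

Section ExtendedFamily.
Variables (R : realType) (n : nat).
Variable Th : forall I : finType, (I -> R) -> ('I_n -> I -> R) -> R.
Arguments Th {I}.
Hypothesis Th_field :
  forall I : finType, (0 < #|I|)%N -> tensor_field (@Pplus R I) (@S0 R I) (@Th I).

Definition ext_family (I : finType) (mu : I -> R) (V : 'I_n -> I -> R) : R :=
  Th (normalize mu) (fun j => projS0 mu (V j)).

Lemma ext_family_Pplus (I : finType) (mu : I -> R) V :
  Pplus mu -> (forall j, S0 (V j)) -> ext_family mu V = Th mu V.
Proof.
move=> mu_P SV; rewrite /ext_family normalize_Pplus_id //.
by congr (Th _ _); apply: funext => j; rewrite projS0_id.
Qed.

Lemma ext_family_multilinear (I : finType) (mu : I -> R) :
  (0 < #|I|)%N -> Mplus mu -> multilinear (@anyvec R I) (ext_family mu).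
Proof.
move=> I0 mu_gt0 V _ k a x y _ _.
have projS0_upd w :
    (fun j => projS0 mu (upd V k w j)) = upd (fun j => projS0 mu (V j)) k (projS0 mu w).
  by apply: funext => j; rewrite /upd; case: (j == k).
rewrite /ext_family !projS0_upd projS0_linear.
apply: (Th_field I0).1; first exact: normalize_Pplus.
all: by [move=> j; apply: S0_projS0 | apply: S0_projS0].
Qed.

Lemma Th_normalize_cvg (I : finType) (U : 'I_n -> I -> R) (mu : I -> R) :
  (0 < #|I|)%N -> (forall j, S0 (U j)) -> Mplus mu ->
  (fun nu => Th (normalize nu) U) @ within (@Mplus R I) (nbhs mu) --> Th (normalize mu) U.
Proof.
move=> I0 SU mu_gt0.
apply: (cvg_within_comp (f := fun p => Th p U) (fun nu => normalize_Pplus I0)).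
  by apply/cvg_coordP => i; apply: normalize_cvg.
by apply/cvg_withinP; apply: (Th_field I0).2 => //; apply: normalize_Pplus.
Qed.

Lemma ext_family_cvg (I : finType) (V : 'I_n -> I -> R) (mu : I -> R) :
  (0 < #|I|)%N -> Mplus mu ->
  (fun nu => ext_family nu V) @ within (@Mplus R I) (nbhs mu) --> ext_family mu V.
Proof.
move=> I0 mu_gt0; have /card_gt0P[i0 _] := I0.
apply: (@multilinear_cvg R n I I (@S0 R I) (@Mplus R I)
  (fun r i => delta R r i - delta R i0 i) (fun nu => Th (normalize nu)) (@S0_lin_closed R I)
  _ _ mu mu_gt0 _ (fun j nu => projS0 nu (V j)) (fun j nu r => projS0 nu (V j) r)).
- by move=> r; rewrite /S0 sumrB !sum_delta subrr.
- by move=> nu nu_gt0; apply: (Th_field I0).1; apply: normalize_Pplus.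
- by move=> U SU; apply: Th_normalize_cvg.
- by move=> j nu; apply: S0_projS0.
- by move=> j nu nu_gt0; apply: S0_decomp; apply: S0_projS0.
- by move=> j r; apply: projS0_cvg.
Qed.

Lemma ext_family_tensor_field (I : finType) :
  (0 < #|I|)%N -> tensor_field (@Mplus R I) (@anyvec R I) (@ext_family I).
Proof.
move=> I0; split=> [mu mu_gt0|V _ mu mu_gt0]; first exact: ext_family_multilinear.
by apply/cvg_withinP; apply: ext_family_cvg.
Qed.

Hypothesis Th_congr : congruent_family (@Pplus R) (@S0 R) (@Th).

Lemma ext_family_congruent : congruent_family (@Mplus R) (@anyvec R) ext_family.
Proof.
move=> I I' I0 I'0 K congrK K_Mplus mu mu_gt0 V _; have [markovK _] := congrK.
rewrite /ext_family -pushK_normalize //.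
under eq_fun do rewrite -pushK_projS0 //.
apply: Th_congr => //.
- by move=> p [p_gt0 p1]; split; [apply: K_Mplus | rewrite sum_pushK].
- exact: normalize_Pplus.
- by move=> j; apply: S0_projS0.
Qed.

End ExtendedFamily.

Lemma tauP_singleton_S0 (R : realType) (n : nat) (I : finType) (P : {set {set 'I_n}})
    (mu : I -> R) (V : 'I_n -> I -> R) :
  partition P [set: 'I_n] -> (forall j, S0 (V j)) -> ~~ [forall B in P, 1 < #|B|]%N ->
  tauP P mu V = 0.
Proof.
move=> partP SV /forall_inPn[B BP]; rewrite -leqNgt => B_le1.
have [j Bj] : exists j, B = [set j].
  apply/cards1P; rewrite eqn_leq B_le1 card_gt0.
  by apply: contraTneq BP => ->; rewrite (partition0 partP).
have tau0 : tau_block B mu V = 0.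
  rewrite /tau_block Bj cards1 subrr; under eq_bigr do rewrite expr0z big_set1 mul1r.
  exact: SV.
by rewrite /tauP (bigD1 _ BP) /= tau0 mul0r.
Qed.

Lemma coeffs_of_congruent_Pplus (R : realType) (n : nat)
    (Th : forall I : finType, (I -> R) -> ('I_n -> I -> R) -> R) :
  (forall I : finType, (0 < #|I|)%N -> tensor_field (@Pplus R I) (@S0 R I) (Th I)) ->
  congruent_family (@Pplus R) (@S0 R) Th ->
  exists c : {set {set 'I_n}} -> R,
    forall I : finType, (0 < #|I|)%N -> forall mu : I -> R, Pplus mu ->
    forall V, (forall j, S0 (V j)) ->
    Th I mu V = \sum_(P | partition P [set: 'I_n] && [forall B in P, 1 < #|B|]%N)
                  c P * tauP P mu V.
Proof.
move=> Th_field Th_congr.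
have [a coeffs] := coeffs_of_congruent_Mplus (ext_family_tensor_field Th_field)
  (ext_family_congruent Th_congr).
exists (fun P => a P 1) => I I0 mu [mu_gt0 mu1] V SV.
rewrite -ext_family_Pplus // coeffs // mnorm_Mplus // mu1.
rewrite (bigID (fun P : {set {set 'I_n}} => [forall B in P, 1 < #|B|]%N)) /=.
rewrite [X in _ + X]big1 ?addr0 //.
by move=> P /andP[partP /(tauP_singleton_S0 mu partP SV) ->]; rewrite mulr0.
Qed.

Lemma congruent_of_coeffs_Pplus (R : realType) (n : nat)
    (Th : forall I : finType, (I -> R) -> ('I_n -> I -> R) -> R)
    (c : {set {set 'I_n}} -> R) :
  (forall I : finType, (0 < #|I|)%N -> forall mu : I -> R, Pplus mu ->
   forall V, (forall j, S0 (V j)) ->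
   Th I mu V = \sum_(P | partition P [set: 'I_n] && [forall B in P, 1 < #|B|]%N)
                 c P * tauP P mu V) ->
  congruent_family (@Pplus R) (@S0 R) Th.
Proof.
move=> coeffs I I' I0 I'0 K [markovK [kappa kappaK]] K_Pplus mu mu_P V SV.
have SKV j : S0 (pushK K (V j)) by rewrite /S0 sum_pushK //; apply: SV.
rewrite (coeffs I' I'0 _ (K_Pplus _ mu_P) _ SKV) (coeffs I I0 _ mu_P _ SV).
by apply: eq_bigr => P _; rewrite (tauP_pushK markovK kappaK) //; apply: (K_Pplus _ mu_P).1.
Qed.

Theorem theorem4p3 (R : realType) (n : nat) :
  (* (a) families on M_+(I) *)
  (forall Th : forall I : finType, (I -> R) -> ('I_n -> I -> R) -> R,
     (forall I : finType, (0 < #|I|)%N ->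
        tensor_field (@Mplus R I) (@anyvec R I) (Th I)) ->
     (congruent_family (@Mplus R) (@anyvec R) Th <->
      exists a : {set {set 'I_n}} -> R -> R,
        forall I : finType, (0 < #|I|)%N ->
        forall mu : I -> R, Mplus mu -> forall V : 'I_n -> I -> R,
          Th I mu V = \sum_(P : {set {set 'I_n}} | partition P [set: 'I_n])
                        a P (mnorm mu) * tauP P mu V))
  /\
  (* (b) families on P_+(I), tangent vectors in S_0(I) *)
  (forall Th : forall I : finType, (I -> R) -> ('I_n -> I -> R) -> R,
     (forall I : finType, (0 < #|I|)%N ->
        tensor_field (@Pplus R I) (@S0 R I) (Th I)) ->
     (congruent_family (@Pplus R) (@S0 R) Th <->
      exists c : {set {set 'I_n}} -> R,
        forall I : finType, (0 < #|I|)%N ->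
        forall mu : I -> R, Pplus mu -> forall V : 'I_n -> I -> R,
          (forall j, S0 (V j)) ->
          Th I mu V = \sum_(P : {set {set 'I_n}} | partition P [set: 'I_n]
                                   && [forall B in P, (1 < #|B|)%N])
                        c P * tauP P mu V)).
Proof.
split=> Th Th_field; split.
- exact: coeffs_of_congruent_Mplus.
- by case=> a; apply: congruent_of_coeffs_Mplus.
- exact: coeffs_of_congruent_Pplus.
- by case=> c; apply: congruent_of_coeffs_Pplus.
Qed.
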